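(* Let $X$ be a (real or complex) Banach space, $S$ a Hausdorff topological space, and $J\colon X\to C^{b}(S)$ a nice embedding (see context). For $s\in S$ let $p_s=J^{*}(\delta_s)\in X^{*}$, let $\Pi_s$ be the $L$-projection of $X^*$ onto $\operatorname{lin}\{p_s\}$, and let $\pi_s\in X^{**}$ be the functional with $\Pi_s(x^* )=\pi_s(x^* )\,p_s$ for all $x^*\in X^*$. Let $T\in L(X)$, put $q_s=T^{*}(p_s)$ for $s\in S$, and for $\varepsilon>0$ let $U_\varepsilon=\{s\in S:\ \|q_s\|>\|T\|-\varepsilon\}$ (an open subset of $S$). Then $T$ satisfies the Daugavet equation $\|\mathrm{Id}+T\|=1+\|T\|$ if and only if $$\sup_{s\in U_\varepsilon}\bigl(|1+\pi_s(q_s)|-(1+|\pi_s(q_s)|)\bigr)\ge 0\qquad\text{for all }\varepsilon>0.$$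
   Context: $C^{b}(S)$ denotes the sup-normed Banach space of bounded continuous scalar-valued functions on $S$, and $\delta_s$ the functional $f\mapsto f(s)$ on it. A closed subspace $F$ of a Banach space $E$ is an $L$-summand if there is a projection $\Pi$ of $E$ onto $F$ (an $L$-projection) with $\|\xi\|=\|\Pi\xi\|+\|\xi-\Pi\xi\|$ for all $\xi\in E$. A linear map $J\colon X\to C^b(S)$ is a nice embedding if $J$ is an isometry and for every $s\in S$: (N1) $p_s:=J^*(\delta_s)$ satisfies $\|p_s\|=1$; (N2) $\operatorname{lin}\{p_s\}$ is an $L$-summand in $X^*$. $L(X)$ denotes the bounded linear operators on $X$. *)

From HB Require Import structures.
From mathcomp Require Import all_boot all_order all_algebra.
From mathcomp Require Import all_classical all_reals.
From mathcomp Require Import topology normedtype.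
From mathcomp Require Export complex.

Set Implicit Arguments. Unset Strict Implicit. Unset Printing Implicit Defensive.
Import Order.TTheory GRing.Theory Num.Theory.
Import numFieldNormedType.Exports.
Local Open Scope classical_set_scope.
Local Open Scope ring_scope.

(* All norm values live in the scalar field K (real elements of K).        *)

Definition lubK {K : numFieldType} (A : set K) (c : K) : Prop :=
  (forall x, A x -> x <= c) /\ (forall d, (forall x, A x -> x <= d) -> c <= d).

(* The supremum of A (chosen), whenever it exists; default 0 otherwise. *)
Definition supK {K : numFieldType} (A : set K) : K := xget 0 (lubK A).

Definition opnorm {K : numFieldType} {X Y : normedModType K} (f : X -> Y) : K :=
  supK ((fun x => `|f x|) @` [set x : X | `|x| <= 1]).

Definition dnorm {K : numFieldType} {X : normedModType K} (f : X -> K) : K :=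
  supK ((fun x => `|f x|) @` [set x : X | `|x| <= 1]).

Definition is_dual {K : numFieldType} {X : normedModType K} (f : X -> K) : Prop :=
  (forall (a : K) (x y : X), f (a *: x + y) = a * f x + f y) /\ continuous f.

Definition lin1 {K : numFieldType} {X : normedModType K} (p : X -> K) : set (X -> K) :=
  [set g | exists a : K, g = (fun x => a * p x)].

Definition is_Lprojection {K : numFieldType} {X : normedModType K}
  (P : (X -> K) -> (X -> K)) (F : set (X -> K)) : Prop :=
  [/\ (forall xi, is_dual xi -> is_dual (P xi)),
      (forall (a : K) xi eta, is_dual xi -> is_dual eta ->
          P (fun x => a * xi x + eta x) = (fun x => a * P xi x + P eta x)),
      (forall xi, is_dual xi -> P (P xi) = P xi),
      (forall xi, is_dual xi -> F (P xi)) /\ (forall eta, F eta -> exists2 xi, is_dual xi & P xi = eta)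
    & (forall xi, is_dual xi ->
          dnorm xi = dnorm (P xi) + dnorm (fun x => xi x - P xi x))].

Definition is_Lsummand {K : numFieldType} {X : normedModType K} (F : set (X -> K)) : Prop :=
  (forall g, F g -> is_dual g) /\ exists P, is_Lprojection P F.

(* Sup norm on C^b(S) (with the convention sup of the empty family = 0). *)
Definition supnorm {K : numFieldType} {S : Type} (f : S -> K) : K :=
  supK (range (fun s => `|f s|) `|` [set 0]).

(* J : X -> C^b(S) is a nice embedding. J x is a bounded continuous function
   S -> K; J^*(delta_s) is the functional x |-> J x s. *)
Definition nice_embedding {K : numFieldType} {X : normedModType K} {S : topologicalType}
  (J : X -> S -> K) : Prop :=
  [/\ (forall (a : K) (x y : X), J (a *: x + y) = (fun s => a * J x s + J y s)),
      (forall x, continuous (J x) /\ exists M : K, forall s, `|J x s| <= M),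
      (forall x, supnorm (J x) = `|x|),
      (forall s, dnorm (fun x => J x s) = 1)
    & (forall s, is_Lsummand (lin1 (fun x => J x s)))].

From HB Require Import structures.
From mathcomp Require Import all_boot all_order all_algebra.
From mathcomp Require Import all_classical all_reals.
From mathcomp Require Import topology normedtype.
From mathcomp Require Import complex.
From mathcomp Require Import ring.

(** The L-decomposition of X^* at p_s gives
    ‖p_s + q_s‖ = |1 + π_s(q_s)| + ‖q_s − π_s(q_s) p_s‖ and
    ‖q_s‖ = |π_s(q_s)| + ‖q_s − π_s(q_s) p_s‖,
    hence ‖p_s + q_s‖ = 1 + ‖q_s‖ + δ_s with δ_s = |1 + π_s(q_s)| − (1 + |π_s(q_s)|) ≤ 0.
    As J is an isometry into a sup-normed space, ‖Id + T‖ = sup_s ‖p_s + q_s‖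
    and ‖T‖ = sup_s ‖q_s‖. So ‖Id + T‖ = 1 + ‖T‖ holds iff there are points s
    at which ‖q_s‖ is close to ‖T‖ and δ_s is close to 0 simultaneously.
    The scalar field is only required to have suprema of bounded sets of real
    elements, which covers both R and R[i]. *)

Set Implicit Arguments. Unset Strict Implicit. Unset Printing Implicit Defensive.
Import Order.TTheory GRing.Theory Num.Theory.
Import numFieldNormedType.Exports.
Local Open Scope classical_set_scope.
Local Open Scope ring_scope.
Local Open Scope complex_scope.

Definition lub_complete (K : numFieldType) : Prop :=
  forall A : set K, (exists x, A x) -> (forall x, A x -> x \is Num.real) ->
  (exists M, forall x, A x -> x <= M) -> exists c, lubK A c.

Lemma lub_complete_real (R : realType) : lub_complete R.
Proof.
move=> A [x0 Ax0] _ [M HM]; exists (sup A); split.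
- by apply: sup_upper_bound; split; [exists x0 | exists M].
- by move=> d Hd; apply: ge_sup; [exists x0 |].
Qed.

Lemma lub_complete_complex (R : realType) : lub_complete R[i].
Proof.
move=> A [x0 Ax0] Ar [M HM].
pose B := [set r : R | A r%:C].
have AB x : A x -> exists2 r, B r & x = r%:C.
  move=> Ax; have /complex_realP[r xr] := Ar _ Ax.
  by exists r; rewrite // /B /= -xr.
have [r0 Br0 _] := AB _ Ax0.
have hsB : has_sup B.
  split; first by exists r0.
  by exists (complex.Re M) => r /HM; rewrite lecE => /andP[].
exists (sup B)%:C; split.
- by move=> x /AB[r Br ->]; rewrite lecR; apply: sup_upper_bound.
- move=> d Hd; have /complex_realP[e de] : d \is Num.real.
    by rewrite -(ler_real (Hd _ Ax0)) Ar.
  rewrite de in Hd *.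
  by rewrite lecR; apply: ge_sup => [|r Br]; [exists r0 | rewrite -lecR; apply: Hd].
Qed.

Lemma pos_lower_bound (K : numDomainType) (a b : K) : 0 < a -> 0 < b ->
  exists z, [/\ 0 < z, z <= a & z <= b].
Proof.
move=> a0 b0; have [ab|/ltW ba] := real_leP (gtr0_real a0) (gtr0_real b0).
- by exists a.
- by exists b.
Qed.

Definition daugavet_defect (K : numDomainType) (a : K) : K := `|1 + a| - (1 + `|a|).

Lemma daugavet_defect_le0 (K : numDomainType) (a : K) : daugavet_defect a <= 0.
Proof. by rewrite subr_le0 -[X in _ <= X + _]normr1 ler_normD. Qed.

Section Suprema.
Variable K : numFieldType.

Lemma lubK_supK (A : set K) c : lubK A c -> supK A = c.
Proof.
move=> Ac; have [ub_x lub_x] := xgetPex 0 (ex_intro (lubK A) c Ac).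
have [ub_c lub_c] := Ac; rewrite /supK.
by apply/le_anti; rewrite lub_x // lub_c.
Qed.

Lemma lubK_approx (A : set K) c d :
  lubK A c -> (forall x, A x -> x \is Num.real) -> d \is Num.real -> d < c ->
  exists2 x, A x & d < x.
Proof.
move=> [_ lub_c] Ar dr dc; apply: contrapT => none.
suff cd : c <= d by have := lt_le_trans dc cd; rewrite ltxx.
apply: lub_c => x Ax; rewrite real_leNgt ?(Ar x Ax) //; apply/negP => dx.
by apply: none; exists x.
Qed.

Definition ball_img (X : normedModType K) (g : X -> K) : set K :=
  g @` [set x : X | `|x| <= 1].

Lemma ball_img_ge0 (X : normedModType K) (g : X -> K) c :
  (forall x, 0 <= g x) -> lubK (ball_img g) c -> 0 <= c.
Proof.
move=> g0 [ub_c _]; apply: le_trans (g0 0) _; apply: ub_c.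
by exists 0; rewrite //= normr0.
Qed.

Hypothesis HS : lub_complete K.

Lemma lubK_ball_img (X : normedModType K) (g : X -> K) B :
  (forall x, 0 <= g x) -> (forall x, `|x| <= 1 -> g x <= B) ->
  lubK (ball_img g) (supK (ball_img g)).
Proof.
move=> g0 gB; have [c Hc] : exists c, lubK (ball_img g) c.
  apply: HS.
  - by exists (g 0), 0; rewrite //= normr0.
  - by move=> _ [x _ <-]; apply: ger0_real.
  - by exists B => _ [x /= x1 <-]; apply: gB.
by rewrite (lubK_supK Hc).
Qed.

Lemma dnorm_lub (X : normedModType K) (f : X -> K) B :
  (forall x, `|x| <= 1 -> `|f x| <= B) ->
  lubK (ball_img (fun x => `|f x|)) (dnorm f).
Proof. exact: lubK_ball_img. Qed.

Lemma opnorm_lub (X Y : normedModType K) (f : X -> Y) B :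
  (forall x, `|x| <= 1 -> `|f x| <= B) ->
  lubK (ball_img (fun x => `|f x|)) (opnorm f).
Proof. exact: lubK_ball_img. Qed.

Lemma dnorm_scale (X : normedModType K) (f : X -> K) B a :
  (forall x, `|x| <= 1 -> `|f x| <= B) ->
  dnorm (fun x => a * f x) = `|a| * dnorm f.
Proof.
move=> fB; have [ub_f lub_f] := dnorm_lub fB.
apply: lubK_supK; split=> [_ [x x1 <-]|d Hd].
  by rewrite normrM ler_wpM2l // ub_f //; exists x.
have d0 : 0 <= d.
  by apply: le_trans (normr_ge0 (a * f 0)) _; apply: Hd; exists 0; rewrite //= normr0.
have [->|a0] := eqVneq a 0; first by rewrite normr0 mul0r.
have a_gt0 : 0 < `|a| by rewrite normr_gt0.
rewrite mulrC -ler_pdivlMr //; apply: lub_f => _ [x x1 <-].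
by rewrite ler_pdivlMr // mulrC -normrM; apply: Hd; exists x.
Qed.

Lemma opnorm_add_id_le (X : normedModType K) (f : X -> X) B :
  (forall x, `|x| <= 1 -> `|f x| <= B) ->
  opnorm (fun x => x + f x) <= 1 + opnorm f.
Proof.
move=> fB; have [ub_f _] := opnorm_lub fB.
have [_ lub_idf] : lubK (ball_img (fun x => `|x + f x|)) (opnorm (fun x => x + f x)).
  apply: (@opnorm_lub _ _ _ (1 + B)) => x x1.
  by rewrite (le_trans (ler_normD _ _)) // lerD // fB.
apply: lub_idf => _ [x x1 <-]; rewrite (le_trans (ler_normD _ _)) // lerD //.
by apply: ub_f; exists x.
Qed.

End Suprema.

Section Duals.
Variables (K : numFieldType) (X : normedModType K).

Lemma is_dual_of_le_norm (p : X -> K) :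
  (forall a x y, p (a *: x + y) = a * p x + p y) -> (forall x, `|p x| <= `|x|) ->
  is_dual p.
Proof.
move=> p_lin p_le; split=> // x; apply/cvgrPdist_lt => e e0; near=> y.
have -> : p x - p y = p (x - y) by rewrite -[x - y]addrC -(scaleN1r y) p_lin mulN1r addrC.
apply: le_lt_trans (p_le _) _; near: y.
exact: (@cvgr_dist_lt _ _ _ _ _ id _ (@cvg_id _ (nbhs x))).
Unshelve. all: by end_near.
Qed.

Lemma is_dual_comp (Y : normedModType K) (f : X -> Y) (g : Y -> K) :
  (forall a x y, f (a *: x + y) = a *: f x + f y) -> continuous f -> is_dual g ->
  is_dual (fun x => g (f x)).
Proof.
move=> f_lin fc [g_lin gc]; split=> [a x y|x]; first by rewrite f_lin g_lin.
exact: continuous_comp (fc x) (gc (f x)).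
Qed.

Lemma is_dual_combine a (p q : X -> K) : is_dual p -> is_dual q ->
  is_dual (fun x => a * p x + q x).
Proof.
move=> [p_lin pc] [q_lin qc]; split=> [b x y|x]; first by rewrite p_lin q_lin; ring.
by apply: cvgD; [apply: cvgM; [exact: cvg_cst | exact: pc] | exact: qc].
Qed.

End Duals.

Section NiceEmbedding.
Variables (K : numFieldType) (X : normedModType K) (S : topologicalType).
Variable J : X -> S -> K.
Hypotheses (HS : lub_complete K) (nJ : nice_embedding J).

Lemma nice_embeddingD x y s : J (x + y) s = J x s + J y s.
Proof. by case: nJ => J_lin _ _ _ _; rewrite -[in LHS](scale1r x) J_lin mul1r. Qed.

Lemma nice_embedding_lub x : lubK (range (fun s => `|J x s|) `|` [set 0]) `|x|.
Proof.
case: nJ => _ J_bnd J_iso _ _; rewrite -J_iso /supnorm.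
have [c Hc] : exists c, lubK (range (fun s => `|J x s|) `|` [set 0]) c.
  apply: HS.
  - by exists 0; right.
  - by move=> _ [[s _ <-]|->]; [exact: normr_real | exact: real0].
  - have [_ [M HM]] := J_bnd x; exists `|M| => _ [[s _ <-]|->]; last exact: normr_ge0.
    by apply: le_trans (HM s) (real_ler_norm _); rewrite (ger_real (HM s)) normr_real.
by rewrite (lubK_supK Hc).
Qed.

Lemma nice_embedding_le x s : `|J x s| <= `|x|.
Proof. by have [ub _] := nice_embedding_lub x; apply: ub; left; exists s. Qed.

Lemma nice_embedding_approx x d : 0 <= d -> d < `|x| -> exists s, d < `|J x s|.
Proof.
move=> d0 dx.
have Ar y : (range (fun s => `|J x s|) `|` [set 0]) y -> y \is Num.real.
  by case=> [[s _ <-]|->]; [exact: normr_real | exact: real0].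
have [_ [[s _ <-]|->] dy] := lubK_approx (nice_embedding_lub x) Ar (ger0_real d0) dx.
- by exists s.
- by have := le_lt_trans d0 dy; rewrite ltxx.
Qed.

Lemma nice_embedding_dual s : is_dual (fun x => J x s).
Proof.
apply: is_dual_of_le_norm => [a x y|x]; last exact: nice_embedding_le.
by case: nJ => J_lin _ _ _ _; rewrite J_lin.
Qed.

Section BoundedMap.
Variables (f : X -> X) (B : K).
Hypothesis fB : forall x, `|x| <= 1 -> `|f x| <= B.

Let JfB s x : `|x| <= 1 -> `|J (f x) s| <= B.
Proof. by move=> x1; apply: le_trans (nice_embedding_le _ _) (fB x1). Qed.

Lemma nice_embedding_dnorm_le_opnorm s : dnorm (fun x => J (f x) s) <= opnorm f.
Proof.
have [ub_f _] := opnorm_lub HS fB; have [_ lub_fs] := dnorm_lub HS (JfB s).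
apply: lub_fs => _ [x x1 <-]; apply: le_trans (nice_embedding_le _ s) _.
by apply: ub_f; exists x.
Qed.

Lemma nice_embedding_opnorm_approx d : 0 <= d -> d < opnorm f ->
  exists s, d < dnorm (fun x => J (f x) s).
Proof.
move=> d0 df.
have Ar y : ball_img (fun x => `|f x|) y -> y \is Num.real.
  by case=> x _ <-; exact: normr_real.
have [_ [x x1 <-] dfx] := lubK_approx (opnorm_lub HS fB) Ar (ger0_real d0) df.
have [s ds] := nice_embedding_approx d0 dfx.
exists s; apply: lt_le_trans ds _.
by have [ub_fs _] := dnorm_lub HS (JfB s); apply: ub_fs; exists x.
Qed.

End BoundedMap.

End NiceEmbedding.

Section LProjection.
Variables (K : numFieldType) (X : normedModType K).
Variables (p : X -> K) (pi : (X -> K) -> K).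
Hypotheses (HS : lub_complete K) (p_dual : is_dual p).
Hypotheses (p_le1 : forall x, `|x| <= 1 -> `|p x| <= 1) (p_norm1 : dnorm p = 1).
Hypothesis Pi : is_Lprojection (fun xi x => pi xi * p x) (lin1 p).

Lemma dnorm_lin1 a : dnorm (fun x => a * p x) = `|a|.
Proof. by rewrite (dnorm_scale HS _ p_le1) p_norm1 mulr1. Qed.

(* [p] lies in the range of the idempotent projection, hence is fixed by it;
   as [p <> 0], this forces [pi p = 1]. *)
Lemma Lprojection_unit : pi p = 1.
Proof.
have [_ _ Pid [_ Psurj] _] := Pi.
have [xi xi_dual Pxi] := Psurj p (ex_intro _ 1 (funext (fun x => esym (mul1r _)))).
have Pp : (fun x => pi p * p x) = p by rewrite -{1}Pxi Pid.
have [//|pi_ne1] := eqVneq (pi p) 1; exfalso.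
have p0 x : p x = 0.
  have /eqP := congr1 (fun f => f x) Pp.
  by rewrite -subr_eq0 -{2}(mul1r (p x)) -mulrBl mulf_eq0 subr_eq0 (negPf pi_ne1) => /eqP.
have : dnorm p = dnorm (fun x => 0 * p x) by congr dnorm; apply: funext => x; rewrite p0 mul0r.
by rewrite dnorm_lin1 normr0 p_norm1 => /eqP; rewrite oner_eq0.
Qed.

Lemma dnorm_add_Lprojection q : is_dual q ->
  dnorm (fun x => p x + q x) = 1 + dnorm q + daugavet_defect (pi q).
Proof.
move=> q_dual; have [_ Plin _ _ Pnorm] := Pi.
pose xi x := 1 * p x + q x.
have PxiE x : pi xi * p x = (1 + pi q) * p x.
  have := congr1 (fun f => f x) (Plin 1 p q p_dual q_dual).
  by rewrite /xi /= Lprojection_unit => ->; ring.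
have := Pnorm xi (is_dual_combine 1 p_dual q_dual); rewrite /=.
have -> : (fun x => pi xi * p x) = (fun x => (1 + pi q) * p x).
  by apply: funext => x; exact: PxiE.
have -> : (fun x => xi x - pi xi * p x) = (fun x => q x - pi q * p x).
  by apply: funext => x; rewrite PxiE /xi; ring.
rewrite dnorm_lin1 => xiE.
rewrite (_ : (fun x => p x + q x) = xi); last by apply: funext => x; rewrite /xi mul1r.
rewrite xiE (Pnorm q q_dual) dnorm_lin1 /daugavet_defect; ring.
Qed.

End LProjection.

Section DaugavetCriterion.
Variables (K : numFieldType) (I : Type) (n m D : I -> K) (N M : K).
Hypotheses (HS : lub_complete K) (N_ge0 : 0 <= N) (M_le : M <= 1 + N).
Hypotheses (n_le : forall i, n i <= N) (m_le : forall i, m i <= M).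
Hypotheses (mE : forall i, m i = 1 + n i + D i) (D_le0 : forall i, D i <= 0).
Hypothesis M_approx : forall d, 0 <= d -> d < M -> exists i, d < m i.

Lemma exists_small_defect : M = 1 + N -> forall a b, 0 < a -> 0 < b ->
  exists i, N - a < n i /\ - b < D i.
Proof.
move=> MN a b a0 b0; have [z [z0 za zb]] := pos_lower_bound a0 b0.
have [i mi] : exists i, 1 + N - z < m i.
  have dr : 1 + N - z \is Num.real.
    by apply: realB; [apply: realD; [exact: real1 | exact: ger0_real] | exact: gtr0_real].
  have [d0|d_lt0] := real_leP (real0 K) dr.
    by apply: M_approx => //; rewrite MN gtrBl.
  have [|i mi] := M_approx (lexx 0); first by rewrite MN (lt_le_trans ltr01) // lerDl.
  by exists i; apply: lt_trans mi.
have nz : N - z < n i by rewrite -(ltrD2l 1) addrA (lt_le_trans mi) // mE gerDl.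
have Dz : - z < D i by rewrite -(ltrD2l (1 + N)) (lt_le_trans mi) // mE lerD2r lerD2l.
by exists i; split; [apply: le_lt_trans nz; rewrite lerD2l lerN2 | apply: le_lt_trans Dz; rewrite lerN2].
Qed.

Lemma daugavet_criterion : M = 1 + N <->
  forall eps, 0 < eps -> exists c, lubK (D @` [set i | N - eps < n i]) c /\ 0 <= c.
Proof.
split=> [MN eps eps0|Hsup].
  have [i0 [Ui0 _]] := exists_small_defect MN eps0 eps0.
  have [c [ub_c lub_c]] : exists c, lubK (D @` [set i | N - eps < n i]) c.
    apply: HS; first by exists (D i0), i0.
    - by move=> _ [i _ <-]; exact: ler0_real.
    - by exists 0 => _ [i _ <-].
  exists c; split; first by [].
  have Di0c : D i0 <= c by apply: ub_c; exists i0.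
  have cr : c \is Num.real by rewrite -(ler_real Di0c) ler0_real.
  rewrite real_leNgt ?real0 //; apply/negP => c_lt0.
  have Nc_gt0 : 0 < - c by rewrite oppr_gt0.
  have [i [Ui Di]] := exists_small_defect MN eps0 Nc_gt0.
  have Dic : D i <= c by apply: ub_c; exists i.
  by have := lt_le_trans Di Dic; rewrite opprK ltxx.
have Nr : N \is Num.real := ger0_real N_ge0.
apply/eqP; rewrite eq_le M_le /= real_leNgt ?realD ?real1 ?(ler_real M_le) ?realD ?real1 //.
apply/negP => M_lt; pose e := (1 + N - M) / 2.
have e0 : 0 < e by rewrite divr_gt0 // subr_gt0.
have [c [lub_c c0]] := Hsup e e0.
have Dr y : (D @` [set i | N - e < n i]) y -> y \is Num.real.
  by case=> i _ <-; exact: ler0_real.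
have Ner : - e \is Num.real by rewrite realN gtr0_real.
have Nec : - e < c by apply: lt_le_trans c0; rewrite oppr_lt0.
have [_ [i Ui <-] Di] := lubK_approx lub_c Dr Ner Nec.
have ME : M = 1 + (N - e) - e by rewrite /e; field.
have : M < m i by rewrite ME mE; apply: ltrD; rewrite ?ltrD2l.
by move/lt_le_trans/(_ (m_le i)); rewrite ltxx.
Qed.

End DaugavetCriterion.

Theorem daugavet_nice_embedding (K : numFieldType) (X : normedModType K)
    (S : topologicalType) (J : X -> S -> K) (pi : S -> (X -> K) -> K)
    (T : {linear X -> X}) :
  lub_complete K -> nice_embedding J ->
  (forall s, is_Lprojection (fun xi x => pi s xi * J x s) (lin1 (fun x => J x s))) ->
  continuous T ->
  (opnorm (fun x => x + T x) = 1 + opnorm T <->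
   forall eps, 0 < eps ->
     exists c, lubK ((fun s => daugavet_defect (pi s (fun x => J (T x) s)))
                     @` [set s | opnorm T - eps < dnorm (fun x => J (T x) s)]) c
               /\ 0 <= c).
Proof.
move=> HS nJ Pi Tc.
have [B TB] := (bounded_funP T).2 ((linear_bounded_continuous T).2 Tc) 1.
have idTB x : `|x| <= 1 -> `|x + T x| <= 1 + B.
  by move=> x1; rewrite (le_trans (ler_normD _ _)) // lerD // TB.
have pq_dnorm s : dnorm (fun x => J (x + T x) s) =
    1 + dnorm (fun x => J (T x) s) + daugavet_defect (pi s (fun x => J (T x) s)).
  under eq_fun do rewrite (nice_embeddingD nJ).
  apply: dnorm_add_Lprojection => //.
  - exact: nice_embedding_dual HS nJ s.
  - by move=> x x1; apply: le_trans (nice_embedding_le HS nJ x s) x1.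
  - by case: nJ.
  - exact: is_dual_comp (linearP T) Tc (nice_embedding_dual HS nJ s).
apply: (daugavet_criterion (m := fun s => dnorm (fun x => J (x + T x) s))) => //.
- exact (ball_img_ge0 (fun x => normr_ge0 _) (opnorm_lub HS TB)).
- exact (opnorm_add_id_le HS TB).
- exact (nice_embedding_dnorm_le_opnorm HS nJ TB).
- exact (nice_embedding_dnorm_le_opnorm HS nJ idTB).
- by move=> s; exact: daugavet_defect_le0.
- exact (nice_embedding_opnorm_approx HS nJ idTB).
Qed.

Theorem lemma2p1 :
  let stmt := fun K : numFieldType =>
    forall (X : completeNormedModType K) (S : topologicalType)
           (J : X -> S -> K) (pi : S -> (X -> K) -> K) (T : {linear X -> X}),
      hausdorff_space S ->
      nice_embedding J ->
      (forall s : S, is_Lprojection (fun xi x => pi s xi * J x s) (lin1 (fun x => J x s))) ->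
      continuous T ->
      (opnorm (fun x => x + T x) = 1 + opnorm T <->
       forall eps : K, 0 < eps ->
         exists c : K,
           lubK ((fun s => `|1 + pi s (fun x => J (T x) s)| - (1 + `|pi s (fun x => J (T x) s)|))
                 @` [set s | opnorm T - eps < dnorm (fun x => J (T x) s)]) c
           /\ 0 <= c)
  in forall R : realType, stmt R /\ stmt R[i].
Proof.
move=> stmt R; split=> X S J pi T _; apply: daugavet_nice_embedding.
- exact: lub_complete_real.
- exact: lub_complete_complex.
Qed.
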